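(* Let $U$ be a finite set of men and $W_1\subseteq W_2$ finite sets of women with $|W_1|\le|W_2|=|U|$, each man having a strict total order over $W_2$ and each woman a strict total order over $U$. Let $M_1'$ be a stable matching of $(U,W_1)$ and $M_2$ a stable matching of $(U,W_2)$, and let $M_2'$ be the union of: the pairs of $M_1'\cap M_2$; the $M_2$-edges of each path component and each Type I cycle of $G(M_1',M_2)$; the $M_1'$-edges of each Type II cycle of $G(M_1',M_2)$. Then $M_2'$ men-dominates $M_2$.
   Context: A matching is a set of man–woman pairs with each person in at most one pair; a matching is stable if it has no blocking pair $(u,w)\notin M$ with ($u$ unmatched or preferring $w$ to his partner) and ($w$ unmatched or preferring $u$ to her partner). $M$ men-dominates $M'$ if every man's partner in $M$ is at least as good for him as his partner in $M'$. The difference graph $G(M,M')$ has vertex set $U\cup W_2$ and edge set $M\triangle M'$. A cycle $C$ of $G(M_1',M_2)$ is of Type I if every man in $C$ strictly prefers his partner in $M_2$ to his partner in $M_1'$ and every woman in $C$ strictly prefers her partner in $M_1'$ to her partner in $M_2$; of Type II if every man in $C$ strictly prefers his partner in $M_1'$ to his partner in $M_2$ and every woman strictly prefers her partner in $M_2$ to her partner in $M_1'$. *)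

From mathcomp Require Import all_boot.
Set Implicit Arguments. Unset Strict Implicit. Unset Printing Implicit Defensive.

(* Convention: r x y means "x is (strictly) preferred to y". *)
Definition strict_total_order (T : finType) (r : rel T) : Prop :=
  irreflexive r /\ transitive r /\ forall x y, x != y -> r x y || r y x.

Section Matchings.
Variables (U W : finType).
Variables (prefU : U -> rel W) (prefW : W -> rel U).
Implicit Types (M : {set U * W}) (A : {set W}).

(* each person in at most one pair *)
Definition is_matching M : Prop :=
  forall u w u' w', (u, w) \in M -> (u', w') \in M -> (u == u') = (w == w').

Definition matching_of A M : Prop :=
  is_matching M /\ forall u w, (u, w) \in M -> w \in A.

Definition man_matched M u := [exists w, (u, w) \in M].
Definition woman_matched M w := [exists u, (u, w) \in M].
Definition man_prefers M u w := [exists w', ((u, w') \in M) && prefU u w w'].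
Definition woman_prefers M w u := [exists u', ((u', w) \in M) && prefW w u u'].

Definition blocking_pair M u w : bool :=
  [&& (u, w) \notin M,
      ~~ man_matched M u || man_prefers M u w &
      ~~ woman_matched M w || woman_prefers M w u].

Definition stable_matching A M : Prop :=
  matching_of A M /\ forall u w, w \in A -> ~~ blocking_pair M u w.

Definition men_dominates M M' : Prop :=
  forall u w', (u, w') \in M' -> exists2 w, (u, w) \in M & (w = w' \/ prefU u w w').

Definition symdiff M1 M2 : {set U * W} := (M1 :\: M2) :|: (M2 :\: M1).

Definition diff_adj M1 M2 : rel (U + W) := fun x y =>
  match x, y with
  | inl u, inr w => (u, w) \in symdiff M1 M2
  | inr w, inl u => (u, w) \in symdiff M1 M2
  | _, _ => false
  end.

Definition comp_is_cycle M1 M2 (x : U + W) : bool :=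
  [forall y, connect (diff_adj M1 M2) x y ==>
     (#|[set z | diff_adj M1 M2 y z]| == 2)].

Definition comp_typeI M1 M2 (x : U + W) : bool :=
  [forall u, connect (diff_adj M1 M2) x (inl u) ==>
     [exists w1, exists w2, [&& (u, w1) \in M1, (u, w2) \in M2 & prefU u w2 w1]]]
  && [forall w, connect (diff_adj M1 M2) x (inr w) ==>
     [exists u1, exists u2, [&& (u1, w) \in M1, (u2, w) \in M2 & prefW w u1 u2]]].

Definition comp_typeII M1 M2 (x : U + W) : bool :=
  [forall u, connect (diff_adj M1 M2) x (inl u) ==>
     [exists w1, exists w2, [&& (u, w1) \in M1, (u, w2) \in M2 & prefU u w1 w2]]]
  && [forall w, connect (diff_adj M1 M2) x (inr w) ==>
     [exists u1, exists u2, [&& (u1, w) \in M1, (u2, w) \in M2 & prefW w u2 u1]]].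

(* M2' built from M1' (= M1) and M2 *)
Definition M2prime M1 M2 : {set U * W} :=
  [set p : U * W |
     (p \in M1 :&: M2)
  || ((p \in M2 :\: M1) &&
        (~~ comp_is_cycle M1 M2 (inl p.1)
         || (comp_is_cycle M1 M2 (inl p.1) && comp_typeI M1 M2 (inl p.1))))
  || ((p \in M1 :\: M2) &&
        (comp_is_cycle M1 M2 (inl p.1) && comp_typeII M1 M2 (inl p.1)))].

End Matchings.

From mathcomp Require Import all_boot.

(* On a cycle component of G(M1', M2), call a man "gaining" if he prefers his
   M2-partner and a woman "losing" if she prefers her M1'-partner.  Stability of
   M1' sends the M2-partner of a gaining man to a losing woman, and stability of
   M2 sends the M1'-partner of a losing woman to a gaining man.  Both maps are
   injective, so the gaining men and the losing women of the component are
   equinumerous and the two maps are onto; hence along every edge of the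
   component either both ends are gaining/losing or neither is.  The component is
   connected, so it is of Type I or of Type II, and in the Type II case each man
   swaps his M2-partner for the M1'-partner he prefers. *)

Set Implicit Arguments.
Unset Strict Implicit.
Unset Printing Implicit Defensive.

Section RelCard.
Variables (T1 T2 : finType) (A : {set T1}) (B : {set T2}) (R : T1 -> T2 -> bool).
Hypothesis R_total : {in A, forall a, exists2 b, b \in B & R a b}.
Hypothesis R_inj : forall a a' b, R a b -> R a' b -> a = a'.

Let graph := [set p | [&& p.1 \in A, p.2 \in B & R p.1 p.2]].

Let leq_card_graph_image : #|A| <= #|snd @: graph|.
Proof.
have sub_A : A \subset fst @: graph.
  apply/subsetP => a aA; have [b bB Rab] := R_total aA.
  by apply/imsetP; exists (a, b); rewrite // inE aA bB Rab.
have snd_inj : {in graph &, injective snd}.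
  move=> [a b] [a' b']; rewrite !inE /= => /and3P[_ _ Rab] /and3P[_ _ Ra'b'] bE.
  by rewrite bE in Rab *; rewrite (R_inj Rab Ra'b').
by rewrite card_in_imset // (leq_trans (subset_leq_card sub_A)) ?leq_imset_card.
Qed.

Let graph_image_sub : snd @: graph \subset B.
Proof. by apply/subsetP => _ /imsetP[p /[!inE] /and3P[_ pB _] ->]. Qed.

Lemma leq_card_rel : #|A| <= #|B|.
Proof. exact: leq_trans leq_card_graph_image (subset_leq_card graph_image_sub). Qed.

Lemma rel_onto : #|B| <= #|A| -> {in B, forall b, exists2 a, a \in A & R a b}.
Proof.
move=> leBA b bB.
have imgE : snd @: graph = B.
  by apply/eqP; rewrite eqEcard graph_image_sub (leq_trans leBA leq_card_graph_image).
move: bB; rewrite -imgE => /imsetP[[a b'] /[!inE] /and3P[/= aA _ Rab] ->].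
by exists a.
Qed.

End RelCard.

Lemma strict_total_irr (T : finType) (r : rel T) x : strict_total_order r -> r x x = false.
Proof. by case=> irr _; exact: irr. Qed.

Lemma strict_total_connex (T : finType) (r : rel T) x y :
  strict_total_order r -> x != y -> ~~ r y x -> r x y.
Proof. by case=> _ [_ tot] /tot /orP[] // ->. Qed.

Section Matchings.
Variables (U W : finType) (prefU : U -> rel W) (prefW : W -> rel U).
Hypothesis hprefU : forall u, strict_total_order (prefU u).
Hypothesis hprefW : forall w, strict_total_order (prefW w).
Implicit Types (M : {set U * W}) (A : {set W}).

Lemma matching_functional M u w w' :
  is_matching M -> (u, w) \in M -> (u, w') \in M -> w = w'.
Proof. by move=> matM uw uw'; apply/eqP; rewrite -(matM _ _ _ _ uw uw') eqxx. Qed.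

Lemma matching_injective M u u' w :
  is_matching M -> (u, w) \in M -> (u', w) \in M -> u = u'.
Proof. by move=> matM uw u'w; apply/eqP; rewrite (matM _ _ _ _ uw u'w) eqxx. Qed.

Lemma matching_share_eq M p q :
  is_matching M -> p \in M -> q \in M -> p.1 = q.1 \/ p.2 = q.2 -> p = q.
Proof.
case: p q => [v w] [v' w'] matM pM qM /= [vE|wE].
  by rewrite vE in pM *; rewrite (matching_functional matM pM qM).
by rewrite wE in pM *; rewrite (matching_injective matM pM qM).
Qed.

Lemma stable_not_mutual A M u w wu uw :
  stable_matching prefU prefW A M -> (u, wu) \in M -> (uw, w) \in M ->
  prefU u w wu -> ~~ prefW w u uw.
Proof.
case=> [[matM domM] stM] uwu uww pref_u; apply/negP => pref_w.
have /negP := stM u w (domM _ _ uww); apply.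
have uwN : (u, w) \notin M.
  apply: contraL pref_u => uwM.
  by rewrite (matching_functional matM uwM uwu) strict_total_irr.
rewrite /blocking_pair uwN /=; apply/andP; split; apply/orP; right; apply/existsP.
  by exists wu; rewrite uwu.
by exists uw; rewrite uww.
Qed.

Lemma stable_woman_prefers_partner A M u w wu uw :
  stable_matching prefU prefW A M -> (u, wu) \in M -> (uw, w) \in M ->
  prefU u w wu -> prefW w uw u.
Proof.
move=> hM uwu uww pref_u; apply: strict_total_connex => //.
  apply: contraTneq pref_u => uwE; rewrite uwE in uww.
  by rewrite (matching_functional hM.1.1 uww uwu) strict_total_irr.
exact: stable_not_mutual hM uwu uww pref_u.
Qed.

Lemma stable_man_prefers_partner A M u w wu uw :
  stable_matching prefU prefW A M -> (u, wu) \in M -> (uw, w) \in M ->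
  prefW w u uw -> prefU u wu w.
Proof.
move=> hM uwu uww pref_w; apply: strict_total_connex => //.
  apply: contraTneq pref_w => wuE; rewrite wuE in uwu.
  by rewrite (matching_injective hM.1.1 uwu uww) strict_total_irr.
by apply: contraL pref_w; exact: stable_not_mutual hM uwu uww.
Qed.

Definition man_gains M1 M2 (v : U) :=
  [exists w1, exists w2, [&& (v, w1) \in M1, (v, w2) \in M2 & prefU v w2 w1]].

Definition woman_loses M1 M2 (w : W) :=
  [exists u1, exists u2, [&& (u1, w) \in M1, (u2, w) \in M2 & prefW w u1 u2]].

Section DifferenceGraph.
Variables M1 M2 : {set U * W}.
Hypotheses (mat1 : is_matching M1) (mat2 : is_matching M2).

Lemma diff_adj_sym : symmetric (diff_adj M1 M2).
Proof. by move=> [v|w] [v'|w']. Qed.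

Lemma symdiff_adjacent p q :
  p != q -> p.1 = q.1 \/ p.2 = q.2 ->
  p \in symdiff M1 M2 -> q \in symdiff M1 M2 ->
  (p \in M1 :\: M2) && (q \in M2 :\: M1) || (q \in M1 :\: M2) && (p \in M2 :\: M1).
Proof.
move=> pq share; rewrite /symdiff !inE.
have twice M : is_matching M -> p \in M -> q \in M -> False.
  by move=> matM pM qM; move: pq; rewrite (matching_share_eq matM pM qM share) eqxx.
case/orP=> /andP[pN pM]; case/orP=> /andP[qN qM]; rewrite ?pM ?pN ?qM ?qN ?orbT //.
  by case: (twice _ mat1 pM qM).
by case: (twice _ mat2 pM qM).
Qed.

Lemma deg2_man_partners v :
  #|[set z | diff_adj M1 M2 (inl v) z]| == 2 ->
  exists w1 w2, (v, w1) \in M1 :\: M2 /\ (v, w2) \in M2 :\: M1.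
Proof.
case/cards2P=> z1 [z2 [z12 nbrs]].
have adj z : z \in [set z1; z2] -> diff_adj M1 M2 (inl v) z by rewrite -nbrs inE.
move: (adj _ (set21 _ _)) (adj _ (set22 _ _)).
case: z1 z2 z12 {nbrs adj} => [?|w1] [?|w2] //= w12 vw1 vw2.
have vw12 : (v, w1) != (v, w2) by apply: contraNneq w12 => -[->].
have /orP[/andP[vw1M vw2M] | /andP[vw2M vw1M]] :=
  symdiff_adjacent vw12 (or_introl erefl) vw1 vw2.
  by exists w1, w2.
by exists w2, w1.
Qed.

Lemma deg2_woman_partners w :
  #|[set z | diff_adj M1 M2 (inr w) z]| == 2 ->
  exists u1 u2, (u1, w) \in M1 :\: M2 /\ (u2, w) \in M2 :\: M1.
Proof.
case/cards2P=> z1 [z2 [z12 nbrs]].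
have adj z : z \in [set z1; z2] -> diff_adj M1 M2 (inr w) z by rewrite -nbrs inE.
move: (adj _ (set21 _ _)) (adj _ (set22 _ _)).
case: z1 z2 z12 {nbrs adj} => [v1|?] [v2|?] //= v12 v1w v2w.
have vw12 : (v1, w) != (v2, w) by apply: contraNneq v12 => -[->].
have /orP[/andP[v1wM v2wM] | /andP[v2wM v1wM]] :=
  symdiff_adjacent vw12 (or_intror erefl) v1w v2w.
  by exists v1, v2.
by exists v2, v1.
Qed.

End DifferenceGraph.

Section CycleComponent.
Variables (A1 : {set W}) (M1 M2 : {set U * W}).
Hypothesis hM1 : stable_matching prefU prefW A1 M1.
Hypothesis hM2 : stable_matching prefU prefW [set: W] M2.
Variable x0 : U + W.
Hypothesis cycle_x0 : comp_is_cycle M1 M2 x0.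

Local Notation comp := (connect (diff_adj M1 M2) x0).

Let mat1 : is_matching M1 := hM1.1.1.
Let mat2 : is_matching M2 := hM2.1.1.

Let comp_sym : connect_sym (diff_adj M1 M2).
Proof. exact/sym_connect_sym/diff_adj_sym. Qed.

Lemma comp_man_partners v :
  comp (inl v) -> exists w1 w2, (v, w1) \in M1 :\: M2 /\ (v, w2) \in M2 :\: M1.
Proof.
by move=> cv; apply: (deg2_man_partners mat1 mat2); exact: (implyP (forallP cycle_x0 _) cv).
Qed.

Lemma comp_woman_partners w :
  comp (inr w) -> exists u1 u2, (u1, w) \in M1 :\: M2 /\ (u2, w) \in M2 :\: M1.
Proof.
by move=> cw; apply: (deg2_woman_partners mat1 mat2); exact: (implyP (forallP cycle_x0 _) cw).
Qed.

Lemma comp_edge v w : (v, w) \in symdiff M1 M2 -> comp (inl v) = comp (inr w).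
Proof. exact: (@connect_closed _ _ comp_sym x0 (inl v) (inr w)). Qed.

Let gaining := [set v | comp (inl v) && man_gains M1 M2 v].
Let losing := [set w | comp (inr w) && woman_loses M1 M2 w].

Lemma gaining_M2_losing v w : v \in gaining -> (v, w) \in M2 -> w \in losing.
Proof.
rewrite !inE => /andP[cv /existsP[w1 /existsP[w2 /and3P[vw1 vw2 pref_v]]]] vw.
have w2E := matching_functional mat2 vw2 vw; subst w2.
have vwN : (v, w) \notin M1.
  apply: contraL pref_v => vwM.
  by rewrite (matching_functional mat1 vwM vw1) strict_total_irr.
have cw : comp (inr w) by rewrite -(comp_edge (v := v)) // /symdiff !inE vw vwN orbT.
have [u1 [_ [/setDP[u1w _] _]]] := comp_woman_partners cw.
rewrite cw; apply/existsP; exists u1; apply/existsP; exists v.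
by rewrite u1w vw (stable_woman_prefers_partner hM1 vw1 u1w).
Qed.

Lemma losing_M1_gaining v w : w \in losing -> (v, w) \in M1 -> v \in gaining.
Proof.
rewrite !inE => /andP[cw /existsP[u1 /existsP[u2 /and3P[u1w u2w pref_w]]]] vw.
have u1E := matching_injective mat1 vw u1w; subst u1.
have vwN : (v, w) \notin M2.
  apply: contraL pref_w => vwM.
  by rewrite (matching_injective mat2 vwM u2w) strict_total_irr.
have cv : comp (inl v) by rewrite (comp_edge (w := w)) // /symdiff !inE vw vwN.
have [_ [w2 [_ /setDP[vw2 _]]]] := comp_man_partners cv.
rewrite cv; apply/existsP; exists w; apply/existsP; exists w2.
by rewrite vw vw2 (stable_man_prefers_partner hM2 vw2 u2w).
Qed.

Let gaining_M2_total :
  {in gaining, forall v, exists2 w, w \in losing & (v, w) \in M2}.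
Proof.
move=> v vg; have /[!inE] /andP[cv _] := vg.
have [_ [w [_ /setDP[vw _]]]] := comp_man_partners cv.
by exists w => //; apply: gaining_M2_losing vw.
Qed.

Let losing_M1_total :
  {in losing, forall w, exists2 v, v \in gaining & (v, w) \in M1}.
Proof.
move=> w wl; have /[!inE] /andP[cw _] := wl.
have [v [_ [/setDP[vw _] _]]] := comp_woman_partners cw.
by exists v => //; apply: losing_M1_gaining vw.
Qed.

Let M2_inj v v' w : (v, w) \in M2 -> (v', w) \in M2 -> v = v'.
Proof. exact: matching_injective. Qed.

Let M1_inj w w' v : (v, w) \in M1 -> (v, w') \in M1 -> w = w'.
Proof. exact: matching_functional. Qed.

Lemma card_gaining_losing : #|gaining| = #|losing|.
Proof.
apply/eqP; rewrite eqn_leq.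
by rewrite (leq_card_rel gaining_M2_total M2_inj) (leq_card_rel losing_M1_total M1_inj).
Qed.

Lemma gaining_M1_losing v w : v \in gaining -> (v, w) \in M1 -> w \in losing.
Proof.
move=> vg vw.
have [w' w'l vw'] := rel_onto losing_M1_total M1_inj (eq_leq card_gaining_losing) vg.
by rewrite (matching_functional mat1 vw vw').
Qed.

Lemma losing_M2_gaining v w : w \in losing -> (v, w) \in M2 -> v \in gaining.
Proof.
move=> wl vw.
have [v' v'g v'w] := rel_onto gaining_M2_total M2_inj (eq_leq (esym card_gaining_losing)) wl.
by rewrite (matching_injective mat2 vw v'w).
Qed.

Let in_gaining_side (y : U + W) : bool :=
  match y with inl v => v \in gaining | inr w => w \in losing end.

Lemma gaining_side_closed : closed (diff_adj M1 M2) in_gaining_side.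
Proof.
apply: (intro_closed comp_sym) => -[v|w] [v'|w'] //=; rewrite /symdiff !inE.
  case/orP=> /andP[_ vw] vg; first exact: gaining_M1_losing vg vw.
  exact: gaining_M2_losing vg vw.
case/orP=> /andP[_ vw] wl; first exact: losing_M1_gaining wl vw.
exact: losing_M2_gaining wl vw.
Qed.

Lemma comp_typeI_or_typeII :
  comp_typeI prefU prefW M1 M2 x0 || comp_typeII prefU prefW M1 M2 x0.
Proof.
have side_const y : comp y -> in_gaining_side y = in_gaining_side x0.
  by move=> cy; symmetry; exact: (closed_connect gaining_side_closed cy).
case side_x0: (in_gaining_side x0); [apply/orP; left | apply/orP; right];
  apply/andP; split; apply/forallP=> y; apply/implyP=> cy;
  have := side_const _ cy; rewrite side_x0 /= inE cy //=.
- have [w1 [w2 [/setDP[vw1 _] /setDP[vw2 vw2N]]]] := comp_man_partners cy.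
  move/negbT/existsPn/(_ w1)/existsPn/(_ w2); rewrite vw1 vw2 /= => not_gains.
  apply/existsP; exists w1; apply/existsP; exists w2; rewrite vw1 vw2 /=.
  by apply: strict_total_connex => //; apply: contraNneq vw2N => <-.
- have [u1 [u2 [/setDP[u1w u1wN] /setDP[u2w _]]]] := comp_woman_partners cy.
  move/negbT/existsPn/(_ u1)/existsPn/(_ u2); rewrite u1w u2w /= => not_loses.
  apply/existsP; exists u1; apply/existsP; exists u2; rewrite u1w u2w /=.
  by apply: strict_total_connex => //; apply: contraNneq u1wN => <-.
Qed.

End CycleComponent.

End Matchings.

Theorem mainTheorem6 (U W : finType) (W1 : {set W})
  (prefU : U -> rel W) (prefW : W -> rel U)
  (hW1 : #|W1| <= #|W|) (hcard : #|W| = #|U|)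
  (hprefU : forall u, strict_total_order (prefU u))
  (hprefW : forall w, strict_total_order (prefW w))
  (M1 M2 : {set U * W})
  (hM1 : stable_matching prefU prefW W1 M1)
  (hM2 : stable_matching prefU prefW [set: W] M2) :
  men_dominates prefU (M2prime prefU prefW M1 M2) M2.
Proof.
move=> u w' uw'M2.
have keep : (u, w') \in M2prime prefU prefW M1 M2 ->
    exists2 w, (u, w) \in M2prime prefU prefW M1 M2 & w = w' \/ prefU u w w'.
  by move=> uw'M2'; exists w'; last left.
have [uw'M1 | uw'M1N] := boolP ((u, w') \in M1).
  by apply: keep; rewrite inE /= !inE uw'M1 uw'M2.
case cyc: (comp_is_cycle M1 M2 (inl u)); last first.
  by apply: keep; rewrite inE /= !inE (negbTE uw'M1N) uw'M2 cyc.
case tI: (comp_typeI prefU prefW M1 M2 (inl u)).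
  by apply: keep; rewrite inE /= !inE (negbTE uw'M1N) uw'M2 cyc tI orbT.
have := comp_typeI_or_typeII hprefU hprefW hM1 hM2 cyc; rewrite tI /= => tII.
have /andP[/forallP/(_ u)/implyP/(_ (connect0 _ _)) u_prefers_M1 _] := tII.
have /existsP[w1 /existsP[w2 /and3P[uw1 uw2 pref_u]]] := u_prefers_M1.
have w2E := matching_functional hM2.1.1 uw2 uw'M2; subst w2.
have uw1N : (u, w1) \notin M2.
  apply: contraL pref_u => uw1M2.
  by rewrite (matching_functional hM2.1.1 uw1M2 uw'M2) strict_total_irr.
exists w1; last by right.
by rewrite inE /= !inE uw1 uw1N cyc tII !orbT.
Qed.
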